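(* Let $(\Lambda W,d)$ be a Sullivan algebra over $\mathbb{Q}$ with $W$ concentrated in odd degrees. Suppose $W$ admits a basis $w_1,\ldots,w_n$ such that for every $1\leq i\leq n$ the element $d w_i$ is a monomial in the $w_j$, i.e. a scalar multiple (possibly zero) of a product $w_{j_1}w_{j_2}\cdots w_{j_m}$ of basis elements. Then $(\Lambda W,d)$ satisfies the Hilali conjecture, i.e. $$\dim H(\Lambda W,d)\geq \dim W.$$
   Context: $\Lambda W$ denotes the free graded-commutative algebra on the graded vector space $W$; a Sullivan algebra is such an algebra with a differential $d$ of degree $+1$ satisfying the usual Sullivan (nilpotence/filtration) condition. *)

(* Exterior (= free graded-commutative, all generators odd)
   algebra Lambda(w_1,...,w_n) over Q, realised as the Q-vector space with basis
   the monomials w_S = w_{s_1} ... w_{s_k}  (s_1 < ... < s_k), S : {set 'I_n}. *)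
From HB Require Import structures.
From mathcomp Require Import all_boot all_order all_algebra.
Set Implicit Arguments. Unset Strict Implicit. Unset Printing Implicit Defensive.
Import Order.TTheory GRing.Theory Num.Theory.
Local Open Scope ring_scope.

Definition LW (n : nat) := {ffun {set 'I_n} -> rat^o}.

Definition mono n (S : {set 'I_n}) : LW n := [ffun T => (T == S)%:R].

Definition gen n (i : 'I_n) : LW n := mono [set i].

(* Koszul sign of  w_S * w_T = sgn S T w_(S u T)  for disjoint S, T *)
Definition wsign n (S T : {set 'I_n}) : rat :=
  (-1) ^+ #|[set p : 'I_n * 'I_n | (p.1 \in S) && (p.2 \in T) && (p.2 < p.1)%N]|.

Definition lmul n (x y : LW n) : LW n :=
  \sum_(S : {set 'I_n}) \sum_(T : {set 'I_n})
     (x S * y T * (if [disjoint S & T] then wsign S T else 0)) *: mono (S :|: T).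

Definition lprod n (s : seq (LW n)) : LW n := foldr (@lmul n) (mono set0) s.

Definition wdeg n (deg : 'I_n -> nat) (S : {set 'I_n}) : nat := \sum_(i in S) deg i.

Definition homog n (deg : 'I_n -> nat) (p : nat) (x : LW n) : Prop :=
  forall S, x S != 0 -> wdeg deg S = p.

Definition Wsp n : {vspace LW n} := <<[seq gen i | i : 'I_n]>>%VS.

(* Lambda V for a subspace V of W: subalgebra generated by V, i.e. the span of
   all products of (sub-families of) a basis of V *)
Definition Lam n (V : {vspace LW n}) : {vspace LW n} :=
  <<[seq lprod (mask (tval t) (vbasis V)) | t : (\dim V).-tuple bool]>>%VS.

Definition sullivan_algebra n (deg : 'I_n -> nat) (d : 'End(LW n)) : Prop :=
  (forall p x, homog deg p x -> homog deg p.+1 (d x)) /\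
  (forall p x y, homog deg p x ->
      d (lmul x y) = lmul (d x) y + (-1) ^+ p *: lmul x (d y)) /\
  (forall x, d (d x) = 0) /\
  (* Sullivan condition: W = U_k W(k), W(0) <= W(1) <= ..., d W(0) = 0,
     d W(k) <= Lambda W(k-1); W finite dimensional so the union is some W(N) *)
  (exists Wf : nat -> {vspace LW n},
      (forall k, (Wf k <= Wf k.+1)%VS) /\
      (forall k, (Wf k <= Wsp n)%VS) /\
      (exists N, Wf N = Wsp n) /\
      (forall x, x \in Wf 0%N -> d x = 0) /\
      (forall k x, x \in Wf k.+1 -> d x \in Lam (Wf k))).

(* dim H(Lambda W, d) = dim ker d - dim im d  (im d <= ker d since d^2 = 0) *)
Definition cohom_dim n (d : 'End(LW n)) : nat := (\dim (lker d) - \dim (limg d))%N.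

From HB Require Import structures.
From mathcomp Require Import all_boot all_order all_algebra.
From mathcomp Require Import zify ring.
Import GRing.Theory.
Set Implicit Arguments. Unset Strict Implicit. Unset Printing Implicit Defensive.

(* Write d w_i = c_i w_(J i) for a set J i of generators, and call i active
   when d w_i <> 0.  As d raises degrees by one and all generators are odd,
   J i has at least two elements for active i.  The relation "j is in J i" is
   well founded: degrees do not increase along it, and when they stay equal
   J i = {j, a} with deg a = 1, so that the map x |-> d/dw_a (d x) sends w_i
   to a nonzero multiple of w_j; these maps lower the Sullivan filtration,
   so they are nilpotent and w_j is killed by fewer of their iterates.
   Call T admissible when J i meets T for every active i in T and J i is not
   contained in T for every active i outside T.  By the Leibniz rule, d w_S
   is a combination of the w_(S - i + J i) with i in S active and J i disjoint
   from S - i; hence for admissible T the monomial w_T is a cocycle that has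
   coefficient 0 in every coboundary, and dim H >= #admissible sets.  Finally,
   removing a maximal element m from a down-closed D, every admissible set of
   D - m extends to D by adding m or not, and one separating two points of
   J m (available by induction) extends both ways; so each element adds at
   least one admissible set, and there are more than n of them. *)

(** * Admissible sets *)

Section AdmissibleSets.
Variables (n : nat) (J : 'I_n -> {set 'I_n}) (active : pred 'I_n) (r : 'I_n -> nat).
Hypothesis rank_J : forall i j, active i -> j \in J i -> r j < r i.
Hypothesis card_J : forall i, active i -> 1 < #|J i|.

Definition admissible (D T : {set 'I_n}) :=
  [&& T \subset D,
      [forall i in T, active i ==> ~~ [disjoint J i & T]] &
      [forall i in D :\: T, active i ==> ~~ (J i \subset T)]].

Definition down_closed (D : {set 'I_n}) := [forall i in D, active i ==> (J i \subset D)].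

Definition separating (D : {set 'I_n}) :=
  forall a b, a \in D -> b \in D -> a != b ->
  exists2 T, admissible D T & (a \in T) && (b \notin T).

Lemma J_avoid i b : active i -> exists2 c, c \in J i & c != b.
Proof.
move=> /card_J; rewrite (cardsD1 b) => J2.
have /card_gt0P [c] : 0 < #|J i :\ b| by move: J2; case: (b \in J i) => /=; lia.
by rewrite !inE => /andP [cb cJ]; exists c.
Qed.

Lemma J_neq0 i : active i -> J i != set0.
Proof. by move=> /(J_avoid i) [c cJ _]; apply/set0Pn; exists c. Qed.

Lemma notin_J i : active i -> i \notin J i.
Proof. by move=> ai; apply/negP => /(rank_J ai); rewrite ltnn. Qed.

Lemma J_exceeds_or_meets i (T : {set 'I_n}) :
  active i -> ~~ (J i \subset T) || ~~ [disjoint J i & T].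
Proof.
move=> /J_neq0 /set0Pn [x xJ]; rewrite -negb_and; apply/negP => /andP [/subsetP JT dis].
by have := JT x xJ; rewrite (disjointFr dis xJ).
Qed.

Lemma admissible_sub D T : admissible D T -> T \subset D.
Proof. by case/and3P. Qed.

Lemma admissible0 D : admissible D set0.
Proof.
apply/and3P; split; rewrite ?sub0set //; first by apply/forall_inP => i; rewrite inE.
by apply/forall_inP => i _; apply/implyP => /J_neq0; rewrite subset0.
Qed.

Lemma admissible_self D : down_closed D -> admissible D D.
Proof.
move=> /forall_inP dD; apply/and3P; split => //; last first.
  by apply/forall_inP => i; rewrite setDv inE.
apply/forall_inP => i iD; apply/implyP => ai.
have /set0Pn [x xJ] := J_neq0 ai.
by apply/negP => /disjointFr /(_ xJ); rewrite (subsetP (implyP (dD i iD) ai)).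
Qed.

Lemma down_closed_setT : down_closed setT.
Proof. by apply/forall_inP => i _; rewrite subsetT implybT. Qed.

Lemma exists_top D : D != set0 ->
  exists2 m, m \in D & forall i, i \in D -> r i <= r m.
Proof. by case/set0Pn => i0 i0D; case: (arg_maxnP r i0D) => m; exists m. Qed.

Section RemoveTop.
Variables (D : {set 'I_n}) (m : 'I_n).
Hypotheses (dD : down_closed D) (mD : m \in D) (mtop : forall i, i \in D -> r i <= r m).

Lemma J_subset_D i : i \in D -> active i -> J i \subset D.
Proof. by move=> iD; apply/implyP; move/forall_inP: dD; apply. Qed.

Lemma top_notin_J i : i \in D -> active i -> m \notin J i.
Proof. by move=> iD ai; apply/negP => /(rank_J ai); rewrite ltnNge mtop. Qed.

Lemma J_subset_D1 i : i \in D -> active i -> J i \subset D :\ m.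
Proof.
move=> iD ai; apply/subsetP => x xJ; rewrite !inE (subsetP (J_subset_D iD ai)) //.
by rewrite andbT; apply: contraNneq (top_notin_J iD ai) => <-.
Qed.

Lemma down_closed_D1 : down_closed (D :\ m).
Proof.
apply/forall_inP => i /setD1P [_ iD]; apply/implyP; exact: J_subset_D1.
Qed.

Lemma admissible_D1 T : admissible (D :\ m) T ->
  (active m -> ~~ (J m \subset T)) -> admissible D T.
Proof.
case/and3P => TD cl /forall_inP un hm; apply/and3P; split => //.
  exact: subset_trans TD (subD1set D m).
apply/forall_inP => i /setDP [iD iT]; apply/implyP => ai.
have [eim | im] := eqVneq i m; first by rewrite eim in ai *; apply: hm.
by move: (un i); rewrite !inE iT im iD => /(_ isT) /implyP; apply.
Qed.

Lemma admissible_D1U T : admissible (D :\ m) T ->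
  (active m -> ~~ [disjoint J m & T]) -> admissible D (m |: T).
Proof.
case/and3P => TD /forall_inP cl /forall_inP un hm; apply/and3P; split.
- by rewrite subUset sub1set mD (subset_trans TD) ?subD1set.
- apply/forall_inP => i; rewrite !inE => iT; apply/implyP => ai.
  have : ~~ [disjoint J i & T].
    by case/orP: iT => [/eqP eim | /cl /implyP]; [rewrite eim in ai *; apply: hm | apply].
  by apply: contra; apply: disjointWr; apply: subsetUr.
- apply/forall_inP => i; rewrite !inE negb_or => /andP [/andP [im iT] iD].
  apply/implyP => ai; have := un i; rewrite !inE iT im iD => /(_ isT) /implyP /(_ ai).
  apply: contra => /subsetP JmT; apply/subsetP => x xJ.
  have := JmT x xJ; rewrite !inE => /orP [/eqP exm | //].
  by move: (top_notin_J iD ai); rewrite -exm xJ.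
Qed.

Lemma admissible_D1_ext T : admissible (D :\ m) T ->
  admissible D T \/ admissible D (m |: T).
Proof.
move=> vT; case: (boolP (active m)) => am; last first.
  by left; apply: admissible_D1 => // am'; rewrite am' in am.
by case/orP: (J_exceeds_or_meets T am) => h;
  [left; apply: admissible_D1 | right; apply: admissible_D1U].
Qed.

Lemma notin_admissible_D1 T : admissible (D :\ m) T -> m \notin T.
Proof. by move=> /admissible_sub /subsetP TD; apply/negP => /TD; rewrite setD11. Qed.

Hypothesis sepD1 : separating (D :\ m).

Lemma separating_D1 : separating D.
Proof.
move=> a b aD bD ab; have [eam | am] := eqVneq a m.
  have bD1 : b \in D :\ m by rewrite !inE bD andbT -eam eq_sym.
  suff [T vT /andP [bT hm]] : exists2 T, admissible (D :\ m) T &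
      (b \notin T) && (active m ==> ~~ [disjoint J m & T]).
    exists (m |: T); first exact: admissible_D1U (implyP hm).
    by rewrite eam !inE eqxx negb_or eq_sym -eam ab.
  case: (boolP (active m)) => [actm | _]; last by exists set0; rewrite ?admissible0 ?inE.
  have [c cJ cb] := J_avoid b actm.
  have [T vT /andP [cT bT]] := sepD1 (subsetP (J_subset_D1 mD actm) c cJ) bD1 cb.
  exists T => //; apply/andP; split => //; apply/implyP => _.
  by apply/negP => dis; rewrite (disjointFr dis cJ) in cT.
have aD1 : a \in D :\ m by rewrite !inE am aD.
have [ebm | bm] := eqVneq b m.
  suff [T vT /andP [aT hm]] : exists2 T, admissible (D :\ m) T &
      (a \in T) && (active m ==> ~~ (J m \subset T)).
    by exists T; [apply: admissible_D1 (implyP hm) | rewrite aT ebm notin_admissible_D1].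
  case: (boolP (active m)) => [actm | _]; last first.
    by exists (D :\ m); rewrite ?admissible_self ?down_closed_D1 ?aD1.
  have [c cJ ca] := J_avoid a actm; rewrite eq_sym in ca.
  have [T vT /andP [aT cT]] := sepD1 aD1 (subsetP (J_subset_D1 mD actm) c cJ) ca.
  by exists T; rewrite // aT /=; apply: contra cT => /subsetP; apply.
have bD1 : b \in D :\ m by rewrite !inE bm bD.
have [T vT /andP [aT bT]] := sepD1 aD1 bD1 ab.
by case: (admissible_D1_ext vT) => vT'; [exists T | exists (m |: T)];
  rewrite // ?inE aT (negbTE bT) ?(negbTE bm) ?orbT.
Qed.

Lemma card_admissible_D1 :
  #|[set T | admissible (D :\ m) T]| < #|[set T | admissible D T]|.
Proof.
set X1 := [set T | admissible (D :\ m) T && (active m ==> ~~ (J m \subset T))].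
set X2 := [set T | admissible (D :\ m) T && (active m ==> ~~ [disjoint J m & T])].
have sub : X1 :|: [set m |: T | T in X2] \subset [set T | admissible D T].
  apply/subsetP => T; rewrite !inE => /orP [/andP [vT /implyP h] | /imsetP [T']].
    exact: admissible_D1.
  by rewrite inE => /andP [vT /implyP h] ->; apply: admissible_D1U.
have dis : X1 :&: [set m |: T | T in X2] = set0.
  apply/setP => T; rewrite !inE; apply/negP => /andP [/andP [vT _] /imsetP [T' _ eT]].
  by move: (notin_admissible_D1 vT); rewrite eT setU11.
have inj : #|[set m |: T | T in X2]| = #|X2|.
  apply: card_in_imset => T1 T2; rewrite !inE => /andP [v1 _] /andP [v2 _] e.
  by rewrite -(setU1K (notin_admissible_D1 v1)) e setU1K ?notin_admissible_D1.
have cover : [set T | admissible (D :\ m) T] \subset X1 :|: X2.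
  apply/subsetP => T; rewrite !inE => ->; case: (boolP (active m)) => //= am.
  exact: J_exceeds_or_meets.
have meet : 0 < #|X1 :&: X2|.
  rewrite card_gt0; apply/set0Pn; case: (boolP (active m)) => am; last first.
    by exists set0; rewrite !inE admissible0 (negbTE am).
  have /set0Pn [x xJ] := J_neq0 am; have [y yJ yx] := J_avoid x am.
  have [T vT /andP [yT xT]] := sepD1 (subsetP (J_subset_D1 mD am) y yJ)
    (subsetP (J_subset_D1 mD am) x xJ) yx.
  exists T; rewrite !inE vT am /=; apply/andP; split.
    by apply/negP => /subsetP /(_ x xJ); rewrite (negbTE xT).
  by apply/negP => dis'; rewrite (disjointFr dis' yJ) in yT.
have eU : #|X1 :|: [set m |: T | T in X2]| = #|X1| + #|X2|.
  by rewrite cardsU dis cards0 subn0 inj.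
have := subset_leq_card sub; have := subset_leq_card cover; have := cardsUI X1 X2.
by rewrite eU; lia.
Qed.

End RemoveTop.

Lemma down_closed_separating D : down_closed D -> separating D.
Proof.
have [k] := ubnP #|D|; elim: k D => // k IH D ltDk dD.
have [-> | D0] := eqVneq D set0; first by move=> a b; rewrite inE.
have [m mD mtop] := exists_top D0.
apply: separating_D1 mtop (IH _ _ (down_closed_D1 dD mtop)) => //.
by move: ltDk; rewrite (cardsD1 m) mD.
Qed.

Lemma card_admissible D : down_closed D -> #|D| < #|[set T | admissible D T]|.
Proof.
have [k] := ubnP #|D|; elim: k D => // k IH D ltDk dD.
have [-> | D0] := eqVneq D set0.
  by rewrite cards0 card_gt0; apply/set0Pn; exists set0; rewrite inE admissible0.
have [m mD mtop] := exists_top D0.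
have dD1 := down_closed_D1 dD mtop.
have ltD1 : #|D :\ m| < k by move: ltDk; rewrite (cardsD1 m) mD.
have := card_admissible_D1 dD mD mtop (down_closed_separating dD1).
by have := IH _ ltD1 dD1; rewrite (cardsD1 m D) mD; apply: leq_ltn_trans.
Qed.

End AdmissibleSets.

(** * Coordinates in the exterior algebra *)

Local Open Scope ring_scope.

Lemma sum_neq0 (R : nmodType) (I : finType) (F : I -> R) :
  \sum_i F i != 0 -> exists i, F i != 0.
Proof.
move=> h; apply/existsP; apply: contraR h; rewrite negb_exists => /forallP h.
by apply/eqP; apply: big1 => i _; apply/eqP; rewrite -[_ == _]negbK h.
Qed.

Lemma sum_mul_eq (R : pzSemiRingType) (I : finType) (F : I -> R) a :
  \sum_i F i * (i == a)%:R = F a.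
Proof.
by rewrite (bigD1 a) //= eqxx mulr1 big1 ?addr0 // => i /negbTE ->; rewrite mulr0.
Qed.

Section ExteriorAlgebra.
Variable n : nat.
Implicit Types (S T U : {set 'I_n}) (x y : LW n).

Definition msign S T : rat := if [disjoint S & T] then wsign S T else 0.

Lemma monoE S T : mono S T = (T == S)%:R.
Proof. by rewrite ffunE. Qed.

Lemma lwZE (c : rat) x U : (c *: x) U = c * x U.
Proof. by rewrite ffunE. Qed.

Lemma lwDE x y U : (x + y) U = x U + y U.
Proof. by rewrite ffunE. Qed.

Lemma lmulE x y U :
  lmul x y U = \sum_S \sum_T x S * y T * msign S T * (U == S :|: T)%:R.
Proof.
rewrite /lmul sum_ffunE; apply: eq_bigr => S _; rewrite sum_ffunE.
by apply: eq_bigr => T _; rewrite lwZE monoE.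
Qed.

Lemma lw_neq0 x : x != 0 -> exists S, x S != 0.
Proof.
move=> xn; apply/existsP; apply: contraR xn; rewrite negb_exists => /forallP h.
by apply/eqP/ffunP => S; rewrite ffunE; apply/eqP; rewrite -[_ == _]negbK h.
Qed.

Lemma lw_sum_mono x : x = \sum_S x S *: mono S.
Proof.
apply/ffunP => U; rewrite sum_ffunE -[LHS](sum_mul_eq (fun S => x S : rat) U).
by apply: eq_bigr => S _; rewrite lwZE monoE eq_sym.
Qed.

Lemma mono_neq0 S T : mono S T != 0 -> T = S.
Proof. by rewrite monoE; case: (T =P S) => // _; rewrite eqxx. Qed.

Lemma wsign_neq0 S T : wsign S T != 0.
Proof. by rewrite expf_neq0 // oppr_eq0 oner_eq0. Qed.

Lemma msign_neq0 S T : msign S T != 0 -> [disjoint S & T].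
Proof. by rewrite /msign; case: ifP; rewrite ?eqxx. Qed.

Lemma msign0l T : msign set0 T = 1.
Proof.
rewrite /msign disjoints_subset sub0set /wsign.
by rewrite (_ : [set _ | _] = set0) ?cards0 //; apply/setP => p; rewrite !inE.
Qed.

Lemma msign0r S : msign S set0 = 1.
Proof.
rewrite /msign disjoint_sym disjoints_subset sub0set /wsign.
by rewrite (_ : [set _ | _] = set0) ?cards0 //; apply/setP => p; rewrite !inE andbF.
Qed.

Lemma supp_lmul x y U : lmul x y U != 0 ->
  exists S T, [/\ x S != 0, y T != 0, [disjoint S & T] & U = S :|: T].
Proof.
rewrite lmulE => /sum_neq0 [S] /sum_neq0 [T].
rewrite !mulf_eq0 !negb_or => /andP [/andP [/andP [xS yT] /msign_neq0 dST] e].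
by exists S, T; split => //; apply/eqP; move: e; case: (U == _); rewrite ?eqxx.
Qed.

Lemma lmul_mono S0 T0 : lmul (mono S0) (mono T0) = msign S0 T0 *: mono (S0 :|: T0).
Proof.
apply/ffunP => U; rewrite lmulE lwZE monoE.
rewrite (bigD1 S0) //= [X in _ + X]big1 ?addr0; last first.
  by move=> S /negbTE SS0; apply: big1 => T _; rewrite monoE SS0 !mul0r.
rewrite (bigD1 T0) //= [X in _ + X]big1 ?addr0; last first.
  by move=> T /negbTE TT0; rewrite !monoE TT0 mulr0n mulr0 !mul0r.
by rewrite !monoE !eqxx !mul1r.
Qed.

Lemma lmul1x y : lmul (mono set0) y = y.
Proof.
apply/ffunP => U; rewrite lmulE (bigD1 set0) //= [X in _ + X]big1 ?addr0; last first.
  by move=> S /negbTE SS0; apply: big1 => T _; rewrite monoE SS0 !mul0r.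
rewrite -[RHS](sum_mul_eq (fun S => y S : rat) U); apply: eq_bigr => T _.
by rewrite monoE eqxx msign0l set0U !mul1r mulr1 eq_sym.
Qed.

Lemma lmulx1 x : lmul x (mono set0) = x.
Proof.
apply/ffunP => U; rewrite lmulE -[RHS](sum_mul_eq (fun S => x S : rat) U).
apply: eq_bigr => S _.
rewrite (bigD1 set0) //= [X in _ + X]big1 ?addr0; last first.
  by move=> T /negbTE TS0; rewrite monoE TS0 mulr0 !mul0r.
by rewrite monoE eqxx msign0r setU0 !mulr1 eq_sym.
Qed.

Definition supp (P : {set 'I_n} -> Prop) x := forall S, x S != 0 -> P S.

Lemma span_supp P (X : seq (LW n)) v :
  (forall y, y \in X -> supp P y) -> v \in <<X>>%VS -> supp P v.
Proof.
move=> h vX S; rewrite (@coord_span _ _ _ (in_tuple X) v vX) sum_ffunE => /sum_neq0 [i].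
rewrite lwZE mulf_eq0 negb_or => /andP [_]; apply: h; exact: mem_nth.
Qed.

Lemma free_monos (s : seq {set 'I_n}) : uniq s -> free [seq mono T | T <- s].
Proof.
move=> us; apply/(@freeP _ _ _ (in_tuple _)) => k sk i.
have ltis : (i < size s)%N by rewrite -(size_map (@mono n)).
have := congr1 (fun f : LW n => f (nth set0 s i)) sk.
rewrite sum_ffunE ffunE (bigD1 i) //= big1 ?addr0 => [|j ji].
  by rewrite lwZE (nth_map set0) // monoE eqxx mulr1.
rewrite lwZE (nth_map set0) ?monoE ?nth_uniq -?(size_map (@mono n)) // eq_sym.
by rewrite (inj_eq val_inj) (negbTE ji) mulr0.
Qed.

Definition singleton S := exists j, S = [set j].

Lemma Wsp_supp x : x \in Wsp n -> supp singleton x.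
Proof.
apply: span_supp => y /mapP [j _ ->] S /mono_neq0 ->; by exists j.
Qed.

Lemma lw_sum_gen x : supp singleton x -> x = \sum_j x [set j] *: gen j.
Proof.
move=> x1; apply/ffunP => U; rewrite sum_ffunE.
under eq_bigr do rewrite lwZE monoE.
have [xU0 | /x1 [j ->]] := eqVneq (x U) 0.
  by rewrite xU0 big1 // => j _; case: eqP => [<- | _]; rewrite ?xU0 ?mul0r ?mulr0n ?mulr0.
rewrite (bigD1 j) //= eqxx mulr1 big1 ?addr0 // => l lj.
by case: eqP => [/set1_inj e | _]; [rewrite e eqxx in lj | rewrite mulr0n mulr0].
Qed.

Lemma sum_supp_singleton x (F : {set 'I_n} -> rat) : supp singleton x ->
  \sum_S x S * F S = \sum_j x [set j] * F [set j].
Proof.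
move=> x1; rewrite {1}(lw_sum_gen x1).
under eq_bigr do rewrite sum_ffunE mulr_suml.
rewrite exchange_big /=; apply: eq_bigr => j _.
rewrite -[RHS](sum_mul_eq (fun S => x [set j] * F S)); apply: eq_bigr => S _.
by rewrite lwZE monoE; ring.
Qed.

Lemma supp_lprod_card (s : seq (LW n)) : (forall v, v \in s -> supp singleton v) ->
  supp (fun S => #|S| = size s) (lprod s).
Proof.
elim: s => [_ S /mono_neq0 -> | v s IH s1 S /supp_lmul [S0 [T [vS0 sT dis ->]]]].
  by rewrite cards0.
have [j eS0] := s1 v (mem_head _ _) S0 vS0.
have s1' w : w \in s -> supp singleton w by move=> ws; apply: s1; rewrite inE ws orbT.
rewrite eS0 cardsU1 (IH s1' T sT).
by move: dis; rewrite eS0 disjoints1 => ->.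
Qed.

Lemma supp_lprod_gen (s : seq 'I_n) :
  supp (fun S => S = [set j in s]) (lprod [seq gen j | j <- s]).
Proof.
elim: s => [|j s IH] S /=; first by move/mono_neq0 ->; apply/setP => x; rewrite !inE.
case/supp_lmul => [S0 [T [/mono_neq0 -> /IH -> _ ->]]].
by apply/setP => x; rewrite !inE.
Qed.

Lemma wsign11 (j l : 'I_n) : wsign [set j] [set l] = (-1) ^+ (l < j)%N.
Proof.
congr (_ ^+ _); case: (ltnP l j) => h.
  rewrite /= -(cards1 (j, l)); apply: eq_card => -[p q]; rewrite !inE /=.
  apply/idP/idP => [/andP [/andP [/eqP -> /eqP ->] _] | /eqP [-> ->]] //.
  by rewrite !eqxx h.
rewrite /=; apply/eqP; rewrite cards_eq0; apply/eqP/setP => -[p q]; rewrite !inE /=.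
by apply/negP => /andP [/andP [/eqP -> /eqP ->]]; rewrite ltnNge h.
Qed.

Lemma wsign11C (a k : 'I_n) : a != k -> wsign [set k] [set a] = - wsign [set a] [set k].
Proof.
move=> ak; rewrite !wsign11.
case: (ltngtP a k) => [| | /val_inj eak]; rewrite ?expr0 ?expr1 ?opprK //.
by rewrite eak eqxx in ak.
Qed.

Lemma msign11 (j l : 'I_n) :
  msign [set j] [set l] = if j == l then 0 else wsign [set j] [set l].
Proof. by rewrite /msign disjoints1 inE; case: (j == l). Qed.

Lemma set2_eq (a k j l : 'I_n) : a != k ->
  ([set a; k] == [set j; l]) = ((j == a) && (l == k)) || ((j == k) && (l == a)).
Proof.
move=> ak; apply/eqP/idP => [e|]; last first.
  by case/orP => /andP [/eqP -> /eqP ->] //; apply/setP => x; rewrite !inE orbC.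
have : [/\ j \in [set a; k], l \in [set a; k], a \in [set j; l] & k \in [set j; l]].
  by split; [rewrite e | rewrite e | rewrite -e | rewrite -e]; rewrite !inE eqxx ?orbT.
rewrite !inE => -[/orP [] /eqP -> /orP [] /eqP -> ha hk];
  by move: ha hk; rewrite ?eqxx ?(eq_sym k) ?(negbTE ak).
Qed.

Lemma lmulE_linear x y U : supp singleton x -> supp singleton y ->
  lmul x y U = \sum_j \sum_l
    x [set j] * y [set l] * msign [set j] [set l] * (U == [set j; l])%:R.
Proof.
move=> x1 y1; rewrite lmulE.
rewrite (eq_bigr (fun S => x S * \sum_T y T * (msign S T * (U == S :|: T)%:R))); last first.
  by move=> S _; rewrite mulr_sumr; apply: eq_bigr => T _; rewrite !mulrA.
rewrite (sum_supp_singleton _ x1); apply: eq_bigr => j _.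
rewrite (sum_supp_singleton _ y1) mulr_sumr; apply: eq_bigr => l _; by rewrite !mulrA.
Qed.

Lemma sum_set2 (f : 'I_n -> 'I_n -> rat) (a k : 'I_n) : a != k ->
  \sum_j \sum_l f j l * ([set a; k] == [set j; l])%:R = f a k + f k a.
Proof.
move=> ak; under eq_bigr => j _ do under eq_bigr => l _ do rewrite set2_eq //.
rewrite (bigD1 a) // [\sum_(j | j != a) _](bigD1 k) ?(eq_sym k) //=.
rewrite [\sum_(j | (j != a) && (j != k)) _]big1 ?addr0; last first.
  move=> j /andP [ja jk]; apply: big1 => l _.
  by rewrite (negbTE ja) (negbTE jk) mulr0.
rewrite eqxx (negbTE ak) /=.
by congr (_ + _); [rewrite -(sum_mul_eq (f a) k) | rewrite -(sum_mul_eq (f k) a)];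
  apply: eq_bigr => l _; rewrite ?orbF ?eqxx.
Qed.

Lemma lmul_set2_linear x y (a k : 'I_n) : supp singleton x -> supp singleton y -> a != k ->
  lmul x y [set a; k] =
    wsign [set a] [set k] * (x [set a] * y [set k] - x [set k] * y [set a]).
Proof.
move=> x1 y1 ak; rewrite lmulE_linear //.
rewrite (sum_set2 (fun j l => x [set j] * y [set l] * msign [set j] [set l])) //.
rewrite !msign11 (negbTE ak) eq_sym (negbTE ak) (wsign11C ak); ring.
Qed.

(* [contr a] is the derivation [d/dw_a] on quadratic terms: it maps the
   product [w_a * w_k] to [w_k] and kills every other monomial. *)
Definition contr (a : 'I_n) y : LW n :=
  \sum_(k | k != a) (wsign [set a] [set k] * y [set a; k]) *: gen k.

Lemma contrD a : {morph contr a : y z / y + z}.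
Proof.
move=> y z; rewrite /contr -big_split; apply: eq_bigr => k _.
by rewrite lwDE mulrDr scalerDl.
Qed.

Lemma contrZ a (c : rat) y : contr a (c *: y) = c *: contr a y.
Proof.
rewrite /contr scaler_sumr; apply: eq_bigr => k _.
by rewrite lwZE scalerA mulrCA.
Qed.

Lemma contr0 a : contr a 0 = 0.
Proof. by have := contrZ a 0 0; rewrite !scale0r. Qed.

Lemma gen_neq0 (i : 'I_n) : gen i != 0.
Proof.
by apply/eqP => /ffunP /(_ [set i]); rewrite !ffunE eqxx => /eqP; rewrite oner_eq0.
Qed.

Lemma contr_mono2 (a m : 'I_n) : a != m ->
  contr a (mono [set m; a]) = wsign [set a] [set m] *: gen m.
Proof.
move=> am; rewrite /contr (bigD1 m) 1?eq_sym //= big1 ?addr0.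
  by rewrite monoE setUC eqxx mulr1.
move=> k /andP [ka km]; rewrite monoE set2_eq 1?eq_sym //.
by rewrite (eq_sym a k) (negbTE ka) (eq_sym m k) (negbTE km) andbF /= mulr0 scale0r.
Qed.

Lemma contr_lmul_linear a x y : supp singleton x -> supp singleton y ->
  contr a (lmul x y) = x [set a] *: y - y [set a] *: x.
Proof.
move=> x1 y1.
transitivity (\sum_k (x [set a] * y [set k] - y [set a] * x [set k]) *: gen k).
  rewrite [RHS](bigD1 a) //= mulrC subrr scale0r add0r; apply: eq_bigr => k ka.
  rewrite lmul_set2_linear // 1?eq_sym // mulrA -expr2 wsign11 sqrr_sign mul1r.
  by rewrite [x [set k] * _]mulrC.
set xa := x [set a]; set ya := y [set a].
rewrite {2}(lw_sum_gen y1) {2}(lw_sum_gen x1).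
by rewrite !scaler_sumr -sumrB; apply: eq_bigr => k _; rewrite !scalerA scalerBl.
Qed.

Lemma contr_lprod a (U : {vspace LW n}) (s : seq (LW n)) : (U <= Wsp n)%VS ->
  {subset s <= U} -> contr a (lprod s) \in U.
Proof.
move=> UW sU; have s1 v : v \in s -> supp singleton v.
  by move=> /sU /(subvP UW) /Wsp_supp.
have [s2 | s2] := eqVneq (size s) 2; last first.
  rewrite (_ : contr a _ = 0) ?mem0v //; apply: big1 => k ka.
  have [-> | /(supp_lprod_card s1)] := eqVneq (lprod s [set a; k]) 0.
    by rewrite mulr0 scale0r.
  by rewrite cards2 eq_sym ka => e; rewrite -e eqxx in s2.
case: s s2 sU {s1} => [|v1 [|v2 []]] //= _ sU.
have [v1U v2U] : v1 \in U /\ v2 \in U by split; apply: sU; rewrite !inE eqxx ?orbT.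
rewrite lmulx1 contr_lmul_linear; try exact/Wsp_supp/(subvP UW).
by apply: memvB; apply: memvZ.
Qed.

Lemma contr_Lam a (U : {vspace LW n}) y : (U <= Wsp n)%VS -> y \in Lam U -> contr a y \in U.
Proof.
move=> UW yL; rewrite (@coord_span _ _ _ (in_tuple _) y yL).
rewrite (big_morph (contr a) (contrD a) (contr0 a)); apply: memv_suml => i _.
rewrite contrZ memvZ //; have /mapP [t _ ->] := mem_nth 0 (ltn_ord i).
by apply: contr_lprod => // v /mem_mask; apply: vbasis_mem.
Qed.

End ExteriorAlgebra.

Lemma cohom_dim_ge n (d : 'End(LW n)) (V : {vspace LW n}) : (forall x, d (d x) = 0) ->
  (V <= lker d)%VS -> (V :&: limg d = 0)%VS -> (\dim V <= cohom_dim d)%N.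
Proof.
move=> dd Vker Vim; have imker : (limg d <= lker d)%VS.
  by apply/subvP => _ /memv_imgP [u _ ->]; rewrite memv_ker dd.
have := dimvS (_ : (V + limg d <= lker d)%VS); rewrite subv_add Vker imker.
rewrite dimv_disjoint_sum // /cohom_dim => /(_ isT) h.
by rewrite leq_subRL ?(leq_trans (leq_addl _ _) h) // addnC.
Qed.

(** * Monomial Sullivan algebras *)

Section MonomialSullivan.
Variables (n : nat) (deg : 'I_n -> nat) (d : 'End(LW n)).
Implicit Types (S T U : {set 'I_n}) (x y : LW n).

Hypothesis deg_odd : forall i, odd (deg i).
Hypothesis d_homog : forall p x, homog deg p x -> homog deg p.+1 (d x).
Hypothesis d_leibniz : forall p x y, homog deg p x ->
  d (lmul x y) = lmul (d x) y + (-1) ^+ p *: lmul x (d y).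
Hypothesis d_monomial : forall i : 'I_n, exists (c : rat) (s : seq 'I_n),
  d (gen i) = c *: lprod [seq gen j | j <- s].

(* the support of the monomial [d w_i], or [set0] if [d w_i = 0] *)
Definition dset i : {set 'I_n} := odflt set0 [pick S | d (gen i) S != 0].
Definition active i := d (gen i) != 0.

Lemma supp_dgen i S : d (gen i) S != 0 -> S = dset i.
Proof.
have [c [s ds]] := d_monomial i.
have supp_s U : d (gen i) U != 0 -> U = [set j in s].
  by rewrite ds lwZE mulf_eq0 negb_or => /andP [_]; apply: supp_lprod_gen.
by rewrite /dset; case: pickP => [S' /supp_s -> /supp_s -> | nz]; rewrite ?nz.
Qed.

Lemma coef_dgen_dset i : active i -> d (gen i) (dset i) != 0.
Proof. by case/lw_neq0 => S dS; rewrite -(supp_dgen dS). Qed.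

Lemma active_supp i S : d (gen i) S != 0 -> active i.
Proof. by apply: contraNneq => ->; rewrite ffunE. Qed.

Lemma dgenE i : d (gen i) = d (gen i) (dset i) *: mono (dset i).
Proof.
apply/ffunP => U; rewrite lwZE monoE.
have [-> | Ui] := eqVneq U (dset i); first by rewrite mulr1.
rewrite mulr0; apply: contraNeq Ui => /supp_dgen ->; exact/eqP.
Qed.

Lemma wdeg1 j : wdeg deg [set j] = deg j.
Proof. by rewrite /wdeg big_set1. Qed.

Lemma wdegD1 S j : j \in S -> wdeg deg S = (deg j + wdeg deg (S :\ j))%N.
Proof. exact: big_setD1. Qed.

Lemma deg_gt0 j : (0 < deg j)%N.
Proof. by have := deg_odd j; case: (deg j). Qed.

Lemma wdeg_gt0 S : S != set0 -> (0 < wdeg deg S)%N.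
Proof. by case/set0Pn => j /wdegD1 ->; rewrite ltn_addr ?deg_gt0. Qed.

Lemma wdeg_eq1 S : wdeg deg S = 1%N -> exists a, S = [set a].
Proof.
have [-> | /set0Pn [a aS]] := eqVneq S set0; first by rewrite /wdeg big_set0.
rewrite (wdegD1 aS); have := deg_gt0 a; have [e | /wdeg_gt0] := eqVneq (S :\ a) set0.
  by exists a; rewrite -(setD1K aS) e setU0.
lia.
Qed.

Lemma homog_gen i : homog deg (deg i) (gen i).
Proof. by move=> S /mono_neq0 ->; rewrite wdeg1. Qed.

Lemma homog_one : homog deg 0 (mono set0).
Proof. by move=> S /mono_neq0 ->; rewrite /wdeg big_set0. Qed.

Lemma wdeg_dset i : active i -> wdeg deg (dset i) = (deg i).+1.
Proof. by move=> /coef_dgen_dset /(d_homog (@homog_gen i)). Qed.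

(* [d w_i] has even degree and all generators are odd *)
Lemma card_dset i : active i -> (1 < #|dset i|)%N.
Proof.
move=> ai; have wi := wdeg_dset ai; rewrite ltnNge leq_eqVlt ltnS leqn0 cards_eq0.
apply/negP; case/orP => [/cards1P [x ex] | /eqP e].
  by move: wi; rewrite ex wdeg1 => e; have := deg_odd x; rewrite e /= deg_odd.
by move: wi; rewrite e /wdeg big_set0.
Qed.

Lemma wdeg_dsetD1 i m : active i -> m \in dset i ->
  (deg m + wdeg deg (dset i :\ m))%N = (deg i).+1 /\ (0 < wdeg deg (dset i :\ m))%N.
Proof.
move=> ai mJ; rewrite -wdegD1 ?wdeg_dset //; split => //; apply: wdeg_gt0.
by rewrite -card_gt0; have := card_dset ai; rewrite (cardsD1 m) mJ.
Qed.

Lemma deg_dset i m : active i -> m \in dset i -> (deg m <= deg i)%N.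
Proof. by move=> ai /(wdeg_dsetD1 ai); lia. Qed.

Lemma dset_deg_eq i m : active i -> m \in dset i -> deg m = deg i ->
  exists2 a, a != m & dset i = [set m; a].
Proof.
move=> ai mJ em; have [+ _] := wdeg_dsetD1 ai mJ; rewrite em => /eqP.
rewrite -addn1 eqn_add2l => /eqP /wdeg_eq1 [a ea].
have : a \in dset i :\ m by rewrite ea set11.
by rewrite !inE => /andP [am _]; exists a => //; rewrite -[LHS](setD1K mJ) ea.
Qed.

Lemma dZ (c : rat) x : d (c *: x) = c *: d x.
Proof. exact: linearZ. Qed.

Lemma d_one : d (mono set0) = 0.
Proof.
have := @d_leibniz 0 (mono set0) (mono set0) homog_one.
rewrite lmul1x expr0 scale1r lmul1x lmulx1 => /(congr1 (fun z => z - d (mono set0))).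
by rewrite addrK subrr.
Qed.

(* [U] indexes one of the monomials produced by the Leibniz rule in [d w_S] *)
Definition dterm S U :=
  exists2 i, i \in S & [/\ active i, [disjoint dset i & S :\ i] & U = S :\ i :|: dset i].

Lemma dtermU1 i S U : i \notin S -> i \notin U -> dterm S U -> dterm (i |: S) (i |: U).
Proof.
move=> iS iU [k kS [ak dk eU]]; have ki : k != i by apply: contraNneq iS => <-.
have iJ : i \notin dset k by apply: contra iU; rewrite eU inE orbC => ->.
have eS : (i |: S) :\ k = i |: (S :\ k).
  by apply/setP => z; rewrite !inE; have [-> | //] := eqVneq z i; rewrite eq_sym ki.
exists k; first by rewrite inE kS orbT.
rewrite eS eU setUA; split => //; apply/pred0P => z /=.
move/pred0P: dk => /(_ z) /=; rewrite !inE.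
by have [-> | _] := eqVneq z i; rewrite ?(negbTE iJ).
Qed.

Lemma supp_d_mono S U : d (mono S) U != 0 -> dterm S U.
Proof.
have [k] := ubnP #|S|; elim: k S U => // k IH S U ltSk.
have [-> | /set0Pn [i iS]] := eqVneq S set0; first by rewrite d_one ffunE eqxx.
set S' := S :\ i; have iS' : i \notin S' by rewrite setD11.
have dis : [disjoint [set i] & S'] by rewrite disjoints1.
have eS : mono S = (msign [set i] S')^-1 *: lmul (gen i) (mono S').
  by rewrite lmul_mono scalerA mulVf ?scale1r ?setD1K // /msign dis wsign_neq0.
rewrite eS dZ (d_leibniz _ (@homog_gen i)) lwZE lwDE mulf_eq0 negb_or.
case/andP => _; have [-> | /supp_lmul [A [T [dA /mono_neq0 -> dAT ->]]] _] :=
  eqVneq (lmul (d (gen i)) (mono S') U) 0; last first.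
  exists i; rewrite // setUC -(supp_dgen dA); split => //; exact: active_supp dA.
rewrite add0r lwZE mulf_eq0 negb_or => /andP [_].
case/supp_lmul => [A [T [/mono_neq0 -> dT + ->]]]; rewrite disjoints1 => iT.
have ltS'k : (#|S'| < k)%N by move: ltSk; rewrite (cardsD1 i) iS.
by have := dtermU1 iS' iT (IH S' T ltS'k dT); rewrite setD1K.
Qed.

Definition admissible_sets := [set T | admissible dset active setT T].

Definition admissible_span := <<[seq mono T | T <- enum admissible_sets]>>%VS.

Lemma dim_admissible_span : \dim admissible_span = #|admissible_sets|.
Proof. by rewrite (eqP (free_monos (enum_uniq _))) size_map cardE. Qed.

Section Filtration.
Variables (Wf : nat -> {vspace LW n}) (N : nat).
Hypotheses (Wf_sub : forall k, (Wf k <= Wsp n)%VS) (Wf_N : Wf N = Wsp n).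
Hypotheses (d_Wf0 : forall x, x \in Wf 0 -> d x = 0)
  (d_WfS : forall k x, x \in Wf k.+1 -> d x \in Lam (Wf k)).

(* By the Sullivan condition [lower a] maps [Wf k.+1] into [Wf k], so long
   enough iterates of these maps vanish on [W]. *)
Definition lower a x := contr a (d x).

Definition lower_iter (s : seq 'I_n) x := foldl (fun y a => lower a y) x s.

Lemma lower_iterZ s (c : rat) x : lower_iter s (c *: x) = c *: lower_iter s x.
Proof. by elim: s x => //= a s IH x; rewrite /lower dZ contrZ IH. Qed.

Lemma lower_iter_Wf k x s : x \in Wf k -> size s = k.+1 -> lower_iter s x = 0.
Proof.
elim: k x s => [|k IH] x [|a s] //= xW [es].
  by case: s es => //= _; rewrite /lower d_Wf0 // contr0.
by apply: IH es; apply: contr_Lam; rewrite ?d_WfS.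
Qed.

Definition killed k x := [forall t : k.-tuple 'I_n, lower_iter t x == 0].

Lemma killedP k x : reflect (forall s, size s = k -> lower_iter s x = 0) (killed k x).
Proof.
apply: (iffP forallP) => [h s es | h t]; last by rewrite h ?size_tuple.
by apply/eqP; have := h (Tuple (introT eqP es)).
Qed.

Lemma killed_gen i : killed N.+1 (gen i).
Proof.
apply/killedP => s /lower_iter_Wf; apply; rewrite Wf_N.
by apply: memv_span; apply: map_f; rewrite mem_enum.
Qed.

Definition height i := ex_minn (ex_intro (fun k => killed k (gen i)) _ (killed_gen i)).

Lemma killed_height i : killed (height i) (gen i).
Proof. by rewrite /height; case: ex_minnP. Qed.

Lemma height_min i k : killed k (gen i) -> (height i <= k)%N.
Proof. by rewrite /height; case: ex_minnP => m _ h /h. Qed.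

Lemma height_le i : (height i <= N.+1)%N.
Proof. exact/height_min/killed_gen. Qed.

Lemma height_dset i m : active i -> m \in dset i -> deg m = deg i ->
  (height m < height i)%N.
Proof.
move=> ai mJ em; have [a am eJ] := dset_deg_eq ai mJ em.
set c := d (gen i) (dset i) * wsign [set a] [set m].
have c0 : c != 0 by rewrite mulf_neq0 ?coef_dgen_dset ?wsign_neq0.
have eT : lower a (gen i) = c *: gen m.
  by rewrite /lower dgenE contrZ [in mono _]eJ contr_mono2 // scalerA.
have hi_gt0 : (0 < height i)%N.
  rewrite lt0n; apply/eqP => hi0; have := killed_height i; rewrite hi0.
  by move/killedP/(_ [::] erefl) => /= /eqP; rewrite (negbTE (gen_neq0 i)).
suff : (height m <= (height i).-1)%N by rewrite -ltnS prednK.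
apply/height_min/killedP => s es.
have -> : gen m = c^-1 *: lower a (gen i) by rewrite eT scalerA mulVf ?scale1r.
rewrite lower_iterZ.
have -> : lower_iter s (lower a (gen i)) = lower_iter (a :: s) (gen i) by [].
by rewrite (killedP _ _ (killed_height i)) ?scaler0 //= es prednK.
Qed.

(* [height i <= N.+1], so [level] orders lexicographically by degree, then height *)
Definition level i := (deg i * N.+2 + height i)%N.

Lemma level_dset i m : active i -> m \in dset i -> (level m < level i)%N.
Proof.
move=> ai mJ; rewrite /level; have := deg_dset ai mJ; rewrite leq_eqVlt.
case/orP => [/eqP em | lt_mi]; first by rewrite em ltn_add2l height_dset.
have : ((deg m).+1 * N.+2 <= deg i * N.+2)%N by rewrite leq_mul2r lt_mi orbT.
by have := height_le m; rewrite mulSn; lia.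
Qed.

Lemma notin_dset i : active i -> i \notin dset i.
Proof. exact: notin_J level_dset i. Qed.

Lemma d_mono_admissible T : admissible dset active setT T -> d (mono T) = 0.
Proof.
case/and3P => _ /forall_inP meets _; apply/ffunP => U; rewrite ffunE.
apply: contraTeq isT => /supp_d_mono [i iT [ai dis eU]].
case/negP: (implyP (meets i iT) ai); rewrite -setI_eq0.
apply/eqP/setP => z; rewrite !inE; apply/negbTE/andP => -[zJ zT].
have zi : z != i by apply: contraTneq zJ => ->; apply: notin_dset.
by have := disjointFr dis zJ; rewrite !inE zi zT.
Qed.

Lemma coef_d_admissible T x : admissible dset active setT T -> d x T = 0.
Proof.
case/and3P => _ _ /forall_inP exceeds.
rewrite (lw_sum_mono x) raddf_sum sum_ffunE; apply: big1 => S _.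
change (d (x S *: mono S) T = 0); rewrite dZ lwZE.
have [-> | /supp_d_mono [i iS [ai dis eT]]] := eqVneq (d (mono S) T) 0; first exact: mulr0.
have iT : i \notin T by rewrite eT !inE eqxx (negbTE (notin_dset ai)).
have := implyP (exceeds i _) ai; rewrite !inE iT => /(_ isT).
by rewrite eT subsetUr.
Qed.

Lemma admissible_span_ker : (admissible_span <= lker d)%VS.
Proof.
apply/span_subvP => v /mapP [T]; rewrite mem_enum inE => vT ->.
by rewrite memv_ker d_mono_admissible.
Qed.

Lemma admissible_span_capv_img : (admissible_span :&: limg d = 0)%VS.
Proof.
apply/eqP; rewrite -subv0; apply/subvP => y /memv_capP [yV /memv_imgP [u _ eyu]].
rewrite memv0 eyu in yV *; apply/eqP/ffunP => S; rewrite ffunE.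
apply: contraTeq isT => duS; have : S \in admissible_sets.
  apply: (span_supp (P := fun S => S \in admissible_sets) _ yV duS) => v /mapP [T].
  by rewrite mem_enum => TVs -> _ /mono_neq0 ->.
by rewrite inE => /(coef_d_admissible u) /eqP; rewrite (negbTE duS).
Qed.

Hypothesis d_nilp : forall x, d (d x) = 0.

Lemma hilali_monomial : (n <= cohom_dim d)%N.
Proof.
have := cohom_dim_ge d_nilp admissible_span_ker admissible_span_capv_img.
apply: leq_trans; rewrite dim_admissible_span -{1}(card_ord n) -cardsT ltnW //.
exact: (card_admissible level_dset card_dset (down_closed_setT dset active)).
Qed.

End Filtration.
End MonomialSullivan.

Unset Implicit Arguments.

Theorem mainTheorem2 (n : nat) (deg : 'I_n -> nat) (d : 'End(LW n)) :
  (* W concentrated in odd degrees *)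
  (forall i, odd (deg i)) ->
  sullivan_algebra deg d ->
  (* each d w_i is a scalar multiple of a product of basis elements *)
  (forall i : 'I_n, exists (c : rat) (s : seq 'I_n),
      d (gen i) = c *: lprod [seq gen j | j <- s]) ->
  (n <= cohom_dim d)%N.
Proof.
move=> deg_odd [d_homog [d_leibniz [d_nilp [Wf [_ [Wf_sub [[N Wf_N] [d_Wf0 d_WfS]]]]]]]].
move=> d_monomial.
exact: (hilali_monomial deg_odd d_homog d_leibniz d_monomial
  Wf_sub Wf_N d_Wf0 d_WfS d_nilp).
Qed.
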